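(* Let $X$ be a real Hilbert space, $I$ a finite index set, and $(T_i)_{i\in I}$ averaged nonexpansive, boundedly regular operators $X\to X$ with $Z_i=\operatorname{Fix}T_i$ and $Z=\bigcap_{i\in I}Z_i\neq\varnothing$. Suppose $(Z_i)_{i\in I}$ is innately boundedly regular. Let $x_0\in X$, let $r\colon\mathbb N\to I$ be a random map for $I$, and define $x_{n+1}=T_{r(n)}x_n$. Then $(x_n)_{n\in\mathbb N}$ converges strongly to some point $\bar z\in Z$. If moreover $Z$ is an affine subspace, then $\bar z=P_Zx_0$.
   Context: $T$ is averaged nonexpansive if $T=(1-\lambda)\mathrm{Id}+\lambda N$ with $\lambda\in[0,1[$ and $N$ nonexpansive. $T$ with $\operatorname{Fix}T\ne\varnothing$ is boundedly regular if every bounded sequence $(x_n)$ with $x_n-Tx_n\to0$ satisfies $d_{\operatorname{Fix}T}(x_n)\to0$. A finite family $(C_i)_{i\in I}$ of closed convex sets with $C=\bigcap_iC_i\ne\varnothing$ is boundedly regular if for every bounded sequence $(x_n)$, $\max_{i}d_{C_i}(x_n)\to0$ implies $d_C(x_n)\to0$; it is innately boundedly regular if $(C_j)_{j\in J}$ is boundedly regular for every nonempty $J\subseteq I$. A map $r\colon\mathbb N\to I$ is a random map for $I$ if $r^{-1}(i)$ is infinite for every $i\in I$. $P_Z$ is the metric projection onto $Z$. *)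

From Stdlib Require Import Reals Lra List Classical ClassicalEpsilon.
Open Scope R_scope.

Definition cauchy_wrt {T : Type} (d : T -> T -> R) (u : nat -> T) : Prop :=
  forall eps, 0 < eps -> exists N, forall m n, (N <= m)%nat -> (N <= n)%nat -> d (u m) (u n) < eps.
Definition conv_wrt {T : Type} (d : T -> T -> R) (u : nat -> T) (l : T) : Prop :=
  forall eps, 0 < eps -> exists N, forall n, (N <= n)%nat -> d (u n) l < eps.

Record RHilbert := {
  hcar :> Type;
  hzero : hcar;
  hadd : hcar -> hcar -> hcar;
  hopp : hcar -> hcar;
  hscal : R -> hcar -> hcar;
  hinner : hcar -> hcar -> R;
  hadd_assoc : forall x y z, hadd x (hadd y z) = hadd (hadd x y) z;
  hadd_comm : forall x y, hadd x y = hadd y x;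
  hadd_0 : forall x, hadd x hzero = x;
  hadd_opp : forall x, hadd x (hopp x) = hzero;
  hscal_assoc : forall a b x, hscal a (hscal b x) = hscal (a * b) x;
  hscal_1 : forall x, hscal 1 x = x;
  hscal_distr_v : forall a x y, hscal a (hadd x y) = hadd (hscal a x) (hscal a y);
  hscal_distr_s : forall a b x, hscal (a + b) x = hadd (hscal a x) (hscal b x);
  hinner_sym : forall x y, hinner x y = hinner y x;
  hinner_add_l : forall x y z, hinner (hadd x y) z = hinner x z + hinner y z;
  hinner_scal_l : forall a x y, hinner (hscal a x) y = a * hinner x y;
  hinner_pos : forall x, 0 <= hinner x x;
  hinner_def : forall x, hinner x x = 0 -> x = hzero;
  hcomplete : forall u : nat -> hcar,
    cauchy_wrt (fun x y => sqrt (hinner (hadd x (hopp y)) (hadd x (hopp y)))) u ->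
    exists l, conv_wrt (fun x y => sqrt (hinner (hadd x (hopp y)) (hadd x (hopp y)))) u l
}.

Arguments hzero {_}. Arguments hadd {_}. Arguments hopp {_}.
Arguments hscal {_}. Arguments hinner {_}.

Section Ops.
Context {X : RHilbert}.

Definition hsub (x y : X) : X := hadd x (hopp y).
Definition hnorm (x : X) : R := sqrt (hinner x x).

Definition converges_to (u : nat -> X) (l : X) : Prop :=
  forall eps, 0 < eps -> exists N, forall n, (N <= n)%nat -> hnorm (hsub (u n) l) < eps.

Definition bounded_seq (u : nat -> X) : Prop := exists M, forall n, hnorm (u n) <= M.

Definition nonexpansive (N : X -> X) : Prop :=
  forall x y, hnorm (hsub (N x) (N y)) <= hnorm (hsub x y).

Definition averaged_nonexpansive (T : X -> X) : Prop :=
  exists (lam : R) (N : X -> X), 0 <= lam < 1 /\ nonexpansive N /\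
    forall x, T x = hadd (hscal (1 - lam) x) (hscal lam (N x)).

Definition Fix (T : X -> X) : X -> Prop := fun x => T x = x.

Definition is_inf (E : R -> Prop) (m : R) : Prop :=
  (forall y, E y -> m <= y) /\ (forall b, (forall y, E y -> b <= y) -> b <= m).

(* d_C(x) = inf { ||x - c|| : c ∈ C } (chosen by Hilbert's epsilon; it exists whenever C is nonempty) *)
Definition dist (C : X -> Prop) (x : X) : R :=
  epsilon (inhabits 0) (fun m => is_inf (fun y => exists c, C c /\ y = hnorm (hsub x c)) m).

Definition boundedly_regular_op (T : X -> X) : Prop :=
  (exists z, Fix T z) /\
  forall u : nat -> X, bounded_seq u ->
    Un_cv (fun n => hnorm (hsub (u n) (T (u n)))) 0 ->
    Un_cv (fun n => dist (Fix T) (u n)) 0.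

(* Finite index set I, enumerated by [enum]. A subfamily is given by J : I -> bool. *)
Definition inter_fam {I : Type} (C : I -> X -> Prop) (J : I -> bool) : X -> Prop :=
  fun x => forall i, J i = true -> C i x.

Definition max_dist {I : Type} (enum : list I) (C : I -> X -> Prop) (J : I -> bool) (x : X) : R :=
  fold_right Rmax 0 (map (fun i => dist (C i) x) (filter J enum)).

Definition boundedly_regular_fam {I : Type} (enum : list I) (C : I -> X -> Prop) (J : I -> bool) : Prop :=
  forall u : nat -> X, bounded_seq u ->
    Un_cv (fun n => max_dist enum C J (u n)) 0 ->
    Un_cv (fun n => dist (inter_fam C J) (u n)) 0.

Definition innately_boundedly_regular {I : Type} (enum : list I) (C : I -> X -> Prop) : Prop :=
  forall J : I -> bool, (exists i, J i = true) -> boundedly_regular_fam enum C J.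

Definition affine_subspace (Z : X -> Prop) : Prop :=
  (exists z, Z z) /\
  forall x y t, Z x -> Z y -> Z (hadd (hscal (1 - t) x) (hscal t y)).

Definition is_proj (Z : X -> Prop) (x p : X) : Prop :=
  Z p /\ forall z, Z z -> hnorm (hsub x p) <= hnorm (hsub x z).

End Ops.

Definition random_map {I : Type} (r : nat -> I) : Prop :=
  forall i N, exists n, (N <= n)%nat /\ r n = i.

Fixpoint iterates {X : Type} {I : Type} (T : I -> X -> X) (r : nat -> I) (x0 : X) (n : nat) : X :=
  match n with
  | O => x0
  | S k => T (r k) (iterates T r x0 k)
  end.

(** Averaged nonexpansive maps are strongly quasi-nonexpansive: for a fixed
    point z, [c ||x - T x||^2 <= ||x - z||^2 - ||T x - z||^2].  Hence the
    iterates are Fejér monotone with respect to Z and the steps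
    [||x_n - x_(n+1)||] tend to 0.  On the bounded region visited by the
    iterates, bounded regularity of the operators and of every subfamily of
    fixed point sets holds uniformly.  An induction on the size of a
    subfamily J then shows: once the steps are small, a window of iterations
    using exactly the indices of J ends close to the intersection of their
    fixed point sets (at the first time the last new index j is used, the
    iterate is close to [Fix T_j] because the step is small, and close to
    the fixed points of J minus j by induction).  Since r uses every index
    infinitely often, [d_Z(x_n) -> 0], and Fejér monotonicity makes the
    sequence Cauchy.  When Z is affine, every [T_i] preserves the inner
    product with the directions of Z, so [x_0 - lim x_n] is orthogonal to Z. *)

From Stdlib Require Import Reals Lra Lia List Classical ClassicalEpsilon.
Open Scope R_scope.

Section InnerProduct.
Context {X : RHilbert}.
Implicit Types x y z w : X.

Lemma hinner_zero_l y : hinner hzero y = 0.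
Proof. pose proof (hinner_add_l X hzero hzero y) as H. rewrite hadd_0 in H. lra. Qed.

Lemma hinner_opp_l x y : hinner (hopp x) y = - hinner x y.
Proof.
  pose proof (hinner_add_l X x (hopp x) y) as H.
  rewrite hadd_opp, hinner_zero_l in H. lra.
Qed.

Lemma hinner_sub_l x y z : hinner (hsub x y) z = hinner x z - hinner y z.
Proof. unfold hsub. rewrite hinner_add_l, hinner_opp_l. ring. Qed.

Lemma hinner_zero_r y : hinner y hzero = 0.
Proof. rewrite hinner_sym. apply hinner_zero_l. Qed.

Lemma hinner_add_r x y z : hinner x (hadd y z) = hinner x y + hinner x z.
Proof. rewrite !(hinner_sym X x). apply hinner_add_l. Qed.

Lemma hinner_scal_r a x y : hinner x (hscal a y) = a * hinner x y.
Proof. rewrite !(hinner_sym X x). apply hinner_scal_l. Qed.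

Lemma hinner_opp_r x y : hinner x (hopp y) = - hinner x y.
Proof. rewrite !(hinner_sym X x). apply hinner_opp_l. Qed.

Lemma hinner_sub_r x y z : hinner x (hsub y z) = hinner x y - hinner x z.
Proof. rewrite !(hinner_sym X x). apply hinner_sub_l. Qed.

Lemma hsub_eq0 x y : hsub x y = hzero -> x = y.
Proof.
  unfold hsub. intro H.
  rewrite <- (hadd_0 X x), <- (hadd_opp X y), (hadd_comm X y), hadd_assoc, H.
  rewrite hadd_comm. apply hadd_0.
Qed.

Lemma hvec_ext x y : (forall w, hinner x w = hinner y w) -> x = y.
Proof. intro H. apply hsub_eq0, hinner_def. rewrite hinner_sub_l, H. ring. Qed.

End InnerProduct.

Ltac hinner_expand :=
  repeat progress rewrite ?hinner_add_l, ?hinner_scal_l, ?hinner_opp_l, ?hinner_sub_l,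
    ?hinner_zero_l, ?hinner_add_r, ?hinner_scal_r, ?hinner_opp_r, ?hinner_sub_r,
    ?hinner_zero_r.

Section Norm.
Context {X : RHilbert}.
Implicit Types x y z : X.

Definition hnorm2 x : R := hinner x x.

Lemma hnorm2_nonneg x : 0 <= hnorm2 x.
Proof. apply hinner_pos. Qed.

Lemma hnorm_nonneg x : 0 <= hnorm x.
Proof. apply sqrt_pos. Qed.

Lemma hnorm_sqr x : hnorm x * hnorm x = hnorm2 x.
Proof. apply sqrt_sqrt, hnorm2_nonneg. Qed.

Lemma hnorm2_eq0 x : hnorm2 x = 0 -> x = hzero.
Proof. apply hinner_def. Qed.

Lemma hnorm2_add x y : hnorm2 (hadd x y) = hnorm2 x + 2 * hinner x y + hnorm2 y.
Proof. unfold hnorm2. hinner_expand. rewrite (hinner_sym X y x). ring. Qed.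

Lemma hnorm2_sub x y : hnorm2 (hsub x y) = hnorm2 x - 2 * hinner x y + hnorm2 y.
Proof. unfold hnorm2. hinner_expand. rewrite (hinner_sym X y x). ring. Qed.

Lemma hnorm2_scal k x : hnorm2 (hscal k x) = k * k * hnorm2 x.
Proof. unfold hnorm2. hinner_expand. ring. Qed.

Lemma hnorm_le_of_hnorm2_le x y : hnorm2 x <= hnorm2 y -> hnorm x <= hnorm y.
Proof. apply sqrt_le_1_alt. Qed.

Lemma hnorm2_le_of_hnorm_le x y : hnorm x <= hnorm y -> hnorm2 x <= hnorm2 y.
Proof. intro H. rewrite <- !hnorm_sqr. pose proof (hnorm_nonneg x). nra. Qed.

Lemma hnorm_opp x : hnorm (hopp x) = hnorm x.
Proof. unfold hnorm. rewrite hinner_opp_l, hinner_opp_r, Ropp_involutive. reflexivity. Qed.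

Lemma hinner_le_hnorm x y : hinner x y <= hnorm x * hnorm y.
Proof.
  destruct (Req_dec (hnorm x) 0) as [Hx|Hx].
  { assert (x = hzero) as -> by (apply hnorm2_eq0; rewrite <- hnorm_sqr, Hx; ring).
    rewrite hinner_zero_l. pose proof (hnorm_nonneg y). nra. }
  destruct (Req_dec (hnorm y) 0) as [Hy|Hy].
  { assert (y = hzero) as -> by (apply hnorm2_eq0; rewrite <- hnorm_sqr, Hy; ring).
    rewrite hinner_zero_r. nra. }
  assert (Hxy : 0 < hnorm x * hnorm y).
  { pose proof (hnorm_nonneg x). pose proof (hnorm_nonneg y).
    apply Rmult_lt_0_compat; lra. }
  pose proof (hnorm2_nonneg (hsub (hscal (hnorm y) x) (hscal (hnorm x) y))) as H.
  rewrite hnorm2_sub, !hnorm2_scal, hinner_scal_l, hinner_scal_r, <- !hnorm_sqr in H.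
  nra.
Qed.

Lemma Rabs_hinner_le x y : Rabs (hinner x y) <= hnorm x * hnorm y.
Proof.
  apply Rabs_le. split; [|apply hinner_le_hnorm].
  pose proof (hinner_le_hnorm x (hopp y)) as H.
  rewrite hinner_opp_r, hnorm_opp in H. lra.
Qed.

Lemma hnorm_add_le x y : hnorm (hadd x y) <= hnorm x + hnorm y.
Proof.
  pose proof (hnorm_nonneg x). pose proof (hnorm_nonneg y).
  apply Rsqr_incr_0_var; [|lra]. unfold Rsqr.
  rewrite hnorm_sqr, hnorm2_add, <- (hnorm_sqr x), <- (hnorm_sqr y).
  pose proof (hinner_le_hnorm x y). nra.
Qed.

Lemma hnorm_scal k x : hnorm (hscal k x) = Rabs k * hnorm x.
Proof.
  unfold hnorm. fold (hnorm2 (hscal k x)). rewrite hnorm2_scal, sqrt_mult_alt.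
  - rewrite <- sqrt_Rsqr_abs. reflexivity.
  - nra.
Qed.

Lemma hnorm_sub_le x y z : hnorm (hsub x z) <= hnorm (hsub x y) + hnorm (hsub y z).
Proof.
  replace (hsub x z) with (hadd (hsub x y) (hsub y z)) by (apply hvec_ext; intro; hinner_expand; ring).
  apply hnorm_add_le.
Qed.

Lemma hnorm_sub_sym x y : hnorm (hsub x y) = hnorm (hsub y x).
Proof.
  unfold hnorm. fold (hnorm2 (hsub x y)) (hnorm2 (hsub y x)).
  rewrite !hnorm2_sub, (hinner_sym X y x). f_equal. ring.
Qed.

Lemma hnorm_le_sub_add x y : hnorm x <= hnorm (hsub x y) + hnorm y.
Proof.
  replace x with (hadd (hsub x y) y) at 1 by (apply hvec_ext; intro; hinner_expand; ring).
  apply hnorm_add_le.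
Qed.

Lemma hnorm_sub_diag x : hnorm (hsub x x) = 0.
Proof. unfold hsub, hnorm. rewrite hadd_opp, hinner_zero_l. apply sqrt_0. Qed.

Lemma hnorm_sub_eq0 x y : hnorm (hsub x y) = 0 -> x = y.
Proof. intro H. apply hsub_eq0, hnorm2_eq0. rewrite <- hnorm_sqr, H. ring. Qed.

End Norm.

Lemma eq0_of_Rabs_lt_all_pos (a : R) : (forall eta, 0 < eta -> Rabs a < eta) -> a = 0.
Proof.
  intro H. destruct (Req_dec a 0) as [|Ha]; [assumption|].
  specialize (H (Rabs a) (Rabs_pos_lt a Ha)). lra.
Qed.

Lemma is_inf_exists (E : R -> Prop) :
  (exists y, E y) -> (forall y, E y -> 0 <= y) -> exists m, is_inf E m.
Proof.
  intros [y0 Hy0] Hlb.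
  destruct (completeness (fun t => E (- t))) as [m [Hub Hleast]].
  - exists 0. intros t Ht. apply Hlb in Ht. lra.
  - exists (- y0). rewrite Ropp_involutive. assumption.
  - exists (- m). split.
    + intros y Hy. assert (- y <= m); [|lra].
      apply Hub. rewrite Ropp_involutive. assumption.
    + intros b Hb. assert (m <= - b); [|lra].
      apply Hleast. intros t Ht. apply Hb in Ht. lra.
Qed.

Section Distance.
Context {X : RHilbert}.
Variable C : X -> Prop.
Hypothesis HC : exists c, C c.

Lemma dist_is_inf x : is_inf (fun y => exists c, C c /\ y = hnorm (hsub x c)) (dist C x).
Proof.
  unfold dist. apply epsilon_spec, is_inf_exists.
  - destruct HC as [c Hc]. eauto.
  - intros y [c [_ ->]]. apply hnorm_nonneg.
Qed.

Lemma dist_le x c : C c -> dist C x <= hnorm (hsub x c).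
Proof. intro Hc. apply (proj1 (dist_is_inf x)). eauto. Qed.

Lemma dist_ge x b : (forall c, C c -> b <= hnorm (hsub x c)) -> b <= dist C x.
Proof. intro H. apply (proj2 (dist_is_inf x)). intros y [c [Hc ->]]. auto. Qed.

Lemma dist_nonneg x : 0 <= dist C x.
Proof. apply dist_ge. intros. apply hnorm_nonneg. Qed.

Lemma dist_mem x : C x -> dist C x = 0.
Proof.
  intro Hx. apply Rle_antisym; [|apply dist_nonneg].
  rewrite <- (hnorm_sub_diag x). apply dist_le, Hx.
Qed.

Lemma dist_approx x eps : 0 < eps -> exists c, C c /\ hnorm (hsub x c) < dist C x + eps.
Proof.
  intro Heps. apply NNPP. intro Hn.
  assert (dist C x + eps <= dist C x); [|lra].
  apply dist_ge. intros c Hc. apply Rnot_lt_le. intro. apply Hn. eauto.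
Qed.

Lemma dist_lipschitz x y : dist C y <= dist C x + hnorm (hsub x y).
Proof.
  assert (dist C y - hnorm (hsub x y) <= dist C x); [|lra].
  apply dist_ge. intros c Hc. pose proof (dist_le y c Hc).
  pose proof (hnorm_sub_le y x c). rewrite (hnorm_sub_sym y x) in *. lra.
Qed.

Lemma dist_fixing_nonexpansive (T : X -> X) x :
  nonexpansive T -> (forall c, C c -> T c = c) -> dist C (T x) <= dist C x.
Proof.
  intros HT Hfix. apply dist_ge. intros c Hc.
  eapply Rle_trans; [apply (dist_le _ c Hc)|]. rewrite <- (Hfix c Hc) at 1. apply HT.
Qed.

End Distance.

Lemma dist_antimono {X : RHilbert} (C D : X -> Prop) x :
  (exists c, C c) -> (forall c, C c -> D c) -> dist D x <= dist C x.
Proof.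
  intros [c0 Hc0] HCD. apply (dist_ge C (ex_intro _ c0 Hc0)). intros c Hc.
  apply (dist_le D (ex_intro _ c0 (HCD c0 Hc0))), HCD, Hc.
Qed.

Section Averaged.
Context {X : RHilbert}.

Lemma averaged_nonexpansive_is_nonexpansive (T : X -> X) :
  averaged_nonexpansive T -> nonexpansive T.
Proof.
  intros [lam [N [Hlam [HN HT]]]] x y.
  replace (hsub (T x) (T y)) with (hadd (hscal (1 - lam) (hsub x y)) (hscal lam (hsub (N x) (N y))))
    by (apply hvec_ext; intro; rewrite !HT; hinner_expand; ring).
  eapply Rle_trans; [apply hnorm_add_le|].
  rewrite !hnorm_scal, (Rabs_right (1 - lam)), (Rabs_right lam) by lra.
  specialize (HN x y). pose proof (hnorm_nonneg (hsub x y)). nra.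
Qed.

Lemma averaged_fix_N (T N : X -> X) lam :
  0 < lam -> (forall x, T x = hadd (hscal (1 - lam) x) (hscal lam (N x))) ->
  forall z, Fix T z -> N z = z.
Proof.
  intros Hlam HT z Hz. apply hvec_ext. intro w.
  assert (H : hinner (T z) w = hinner z w) by (rewrite Hz; reflexivity).
  rewrite HT, hinner_add_l, !hinner_scal_l in H.
  apply (Rmult_eq_reg_l lam); lra.
Qed.

(* With [a = x - z] and [b = N x - z], the gap of the inequality is
   [lam ((1-lam)^2 ||a - b||^2 + ||a||^2 - ||b||^2)]. *)
Lemma averaged_strongly_quasinonexpansive (T : X -> X) :
  averaged_nonexpansive T ->
  exists c, 0 < c /\ forall x z, Fix T z ->
    c * hnorm2 (hsub x (T x)) <= hnorm2 (hsub x z) - hnorm2 (hsub (T x) z).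
Proof.
  intros [lam [N [Hlam [HN HT]]]]. exists (1 - lam). split; [lra|].
  intros x z Hz.
  set (a := hsub x z). set (b := hsub (N x) z).
  assert (HAB : 0 <= lam * (hnorm2 a - hnorm2 b)).
  { destruct (Req_dec lam 0) as [->|Hlam0]; [lra|].
    apply Rmult_le_pos; [lra|]. apply Rge_le, Rge_minus, Rle_ge, hnorm2_le_of_hnorm_le.
    unfold a, b. rewrite <- (averaged_fix_N T N lam ltac:(lra) HT z Hz) at 1. apply HN. }
  replace (hsub x (T x)) with (hscal lam (hsub a b))
    by (apply hvec_ext; intro; unfold a, b; rewrite HT; hinner_expand; ring).
  replace (hsub (T x) z) with (hadd (hscal (1 - lam) a) (hscal lam b))
    by (apply hvec_ext; intro; unfold a, b; rewrite HT; hinner_expand; ring).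
  pose proof (hnorm2_nonneg (hsub a b)) as Hd.
  rewrite hnorm2_sub in Hd.
  rewrite hnorm2_scal, hnorm2_add, hnorm2_sub, !hnorm2_scal, hinner_scal_l, hinner_scal_r.
  assert (0 <= lam * ((1 - lam) * (1 - lam)) * (hnorm2 a - 2 * hinner a b + hnorm2 b))
    by (apply Rmult_le_pos; [apply Rmult_le_pos; nra | lra]).
  nra.
Qed.

Lemma slope_eq_of_le_forall (a b c d : R) : (forall t, a + t * b <= c + t * d) -> b = d.
Proof.
  intro H. destruct (Req_dec b d) as [|Hbd]; [assumption|].
  specialize (H ((c - a + 1) / (b - d))).
  assert ((c - a + 1) / (b - d) * b - (c - a + 1) / (b - d) * d = c - a + 1)
    by (field; lra).
  lra.
Qed.

(* [||N x - p_t|| <= ||x - p_t||] along the whole line [p_t] of fixed points is an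
   inequality between affine functions of [t], so the slopes agree. *)
Lemma averaged_preserves_inner_along_fix_line (T : X -> X) (z w : X) :
  averaged_nonexpansive T ->
  (forall t, Fix T (hadd (hscal (1 - t) z) (hscal t w))) ->
  forall x, hinner (T x) (hsub w z) = hinner x (hsub w z).
Proof.
  intros [lam [N [Hlam [HN HT]]]] Hline x.
  destruct (Req_dec lam 0) as [->|Hlam0].
  { rewrite HT. hinner_expand. ring. }
  assert (HNx : hinner (N x) (hsub w z) = hinner x (hsub w z)).
  { enough (Hslope : -2 * hinner (hsub (N x) z) (hsub w z) = -2 * hinner (hsub x z) (hsub w z))
      by (rewrite !hinner_sub_l in Hslope; lra).
    apply (slope_eq_of_le_forall (hnorm2 (hsub (N x) z)) _ (hnorm2 (hsub x z))).
    intro t. set (p := hadd (hscal (1 - t) z) (hscal t w)).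
    assert (Hp : N p = p) by (apply (averaged_fix_N T N lam); [lra | exact HT | apply Hline]).
    pose proof (hnorm2_le_of_hnorm_le _ _ (HN x p)) as H. rewrite Hp in H.
    assert (Hsplit : forall y, hsub y p = hsub (hsub y z) (hscal t (hsub w z)))
      by (intro; apply hvec_ext; intro; unfold p; hinner_expand; ring).
    rewrite !Hsplit, (hnorm2_sub (hsub (N x) z)), (hnorm2_sub (hsub x z)), !hinner_scal_r, !hnorm2_scal in H.
    lra. }
  rewrite HT, hinner_add_l, !hinner_scal_l, HNx. ring.
Qed.

End Averaged.

Definition vanishes (s : nat -> R) : Prop :=
  forall eps, 0 < eps -> exists N, forall n, (N <= n)%nat -> s n < eps.

Lemma decrements_vanish (f g : nat -> R) :
  (forall n, 0 <= f n) -> (forall n, 0 <= g n <= f n - f (S n)) -> vanishes g.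
Proof.
  intros Hf Hg eps Heps.
  assert (Hdecr : forall n m, (n <= m)%nat -> f m <= f n).
  { intros n m Hnm. induction Hnm; [lra|]. specialize (Hg m). lra. }
  destruct (is_inf_exists (fun y => exists n, y = f n)) as [L [HL HLub]].
  { exists (f 0%nat). eauto. }
  { intros y [n ->]. apply Hf. }
  destruct (classic (exists N, f N < L + eps)) as [[N HN]|Hno].
  - exists N. intros n Hn. specialize (Hg n).
    assert (L <= f (S n)) by (apply HL; eauto). pose proof (Hdecr N n Hn). lra.
  - assert (L + eps <= L); [|lra].
    apply HLub. intros y [n ->]. apply Rnot_lt_le. intro. apply Hno. eauto.
Qed.

Lemma uniform_pos_min {A : Type} (P : A -> R -> Prop) (l : list A) :
  (forall a d d', 0 < d' <= d -> P a d -> P a d') ->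
  (forall a, In a l -> exists d, 0 < d /\ P a d) ->
  exists d, 0 < d /\ forall a, In a l -> P a d.
Proof.
  intros Hanti. induction l as [|a l IH]; intro H.
  - exists 1. split; [lra|]. intros a [].
  - destruct IH as [d1 [Hd1 H1]]; [intros; apply H; right; assumption|].
    destruct (H a (or_introl eq_refl)) as [d2 [Hd2 H2]].
    exists (Rmin d1 d2). split; [apply Rmin_glb_lt; assumption|].
    intros b [<-|Hb].
    + apply (Hanti a d2); [split; [apply Rmin_glb_lt | apply Rmin_r]|]; assumption.
    + apply (Hanti b d1); [split; [apply Rmin_glb_lt | apply Rmin_l]|]; auto.
Qed.

(* Bounded regularity holds uniformly on every ball: otherwise a bounded
   counterexample sequence with [f -> 0] but [g >= eps] can be chosen. *)
Lemma regularity_uniform_on_ball {X : RHilbert} (f g : X -> R) (z0 : X) (rho : R) :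
  (forall y, 0 <= f y) ->
  (forall u : nat -> X, bounded_seq u ->
     Un_cv (fun n => f (u n)) 0 -> Un_cv (fun n => g (u n)) 0) ->
  forall eps, 0 < eps -> exists delta, 0 < delta /\
    forall y, hnorm (hsub y z0) <= rho -> f y < delta -> g y < eps.
Proof.
  intros Hf Hreg eps Heps. apply NNPP. intro Hn.
  assert (Hbad : forall n : nat, exists y,
    hnorm (hsub y z0) <= rho /\ f y < / INR (S n) /\ eps <= g y).
  { intro n. apply NNPP. intro Hn2. apply Hn. exists (/ INR (S n)).
    split; [apply Rinv_0_lt_compat, lt_0_INR; lia|].
    intros y Hy Hfy. apply Rnot_le_lt. intro. apply Hn2. eauto. }
  set (u := fun n => proj1_sig (constructive_indefinite_description _ (Hbad n))).
  assert (Hu : forall n, hnorm (hsub (u n) z0) <= rho /\ f (u n) < / INR (S n) /\ eps <= g (u n))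
    by (intro n; exact (proj2_sig (constructive_indefinite_description _ (Hbad n)))).
  assert (Hbounded : bounded_seq u).
  { exists (rho + hnorm z0). intro n.
    pose proof (hnorm_le_sub_add (u n) z0). pose proof (proj1 (Hu n)). lra. }
  assert (Hfu : Un_cv (fun n => f (u n)) 0).
  { intros e He. destruct (archimed_cor1 e He) as [N [HN HN0]]. exists N. intros n HNn.
    unfold R_dist. rewrite Rminus_0_r, Rabs_right by (apply Rle_ge, Hf).
    assert (/ INR (S n) <= / INR N)
      by (apply Rinv_le_contravar; [apply lt_0_INR; assumption | apply le_INR; lia]).
    pose proof (proj1 (proj2 (Hu n))). lra. }
  destruct (Hreg u Hbounded Hfu eps Heps) as [N HN].
  specialize (HN N (le_n N)). unfold R_dist in HN. rewrite Rminus_0_r in HN.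
  pose proof (proj2 (proj2 (Hu N))). pose proof (RRle_abs (g (u N))). lra.
Qed.

Section Convergence.
Context {X : RHilbert}.

Lemma fejer_cauchy (u : nat -> X) (C : X -> Prop) :
  (exists c, C c) ->
  (forall c, C c -> forall n m, (n <= m)%nat -> hnorm (hsub (u m) c) <= hnorm (hsub (u n) c)) ->
  vanishes (fun n => dist C (u n)) ->
  cauchy_wrt (fun a b => hnorm (hsub a b)) u.
Proof.
  intros HC Hfejer Hdist eps Heps.
  destruct (Hdist (eps / 4)) as [N HN]; [lra|].
  destruct (dist_approx C HC (u N) (eps / 4)) as [c [Hc Hcn]]; [lra|].
  specialize (HN N (le_n N)). exists N. intros m n Hm Hn.
  eapply Rle_lt_trans; [apply (hnorm_sub_le _ c)|]. rewrite (hnorm_sub_sym c).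
  pose proof (Hfejer c Hc N m Hm). pose proof (Hfejer c Hc N n Hn). lra.
Qed.

Lemma limit_fixed (T : X -> X) (C : X -> Prop) (u : nat -> X) (l : X) :
  nonexpansive T -> (forall c, C c -> T c = c) -> (exists c, C c) ->
  converges_to u l -> vanishes (fun n => dist C (u n)) -> T l = l.
Proof.
  intros HT Hfix HC Hl Hdist. apply hnorm_sub_eq0, eq0_of_Rabs_lt_all_pos.
  intros eta Heta. rewrite Rabs_right by (apply Rle_ge, hnorm_nonneg).
  destruct (Hl (eta / 8)) as [N1 HN1]; [lra|].
  destruct (Hdist (eta / 8)) as [N2 HN2]; [lra|].
  set (n := Nat.max N1 N2).
  specialize (HN1 n ltac:(lia)). specialize (HN2 n ltac:(lia)).
  destruct (dist_approx C HC (u n) (eta / 8)) as [c [Hc Hcn]]; [lra|].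
  assert (hnorm (hsub c l) < 3 * eta / 8).
  { eapply Rle_lt_trans; [apply (hnorm_sub_le _ (u n))|]. rewrite hnorm_sub_sym. lra. }
  eapply Rle_lt_trans; [apply (hnorm_sub_le _ c)|].
  pose proof (HT l c) as Hlc. rewrite (Hfix c Hc), (hnorm_sub_sym l c) in Hlc. lra.
Qed.

Lemma converges_inner (u : nat -> X) (l v : X) (a : R) :
  converges_to u l -> (forall n, hinner (u n) v = a) -> hinner l v = a.
Proof.
  intros Hl Hu. apply Rminus_diag_uniq, eq0_of_Rabs_lt_all_pos. intros eta Heta.
  pose proof (hnorm_nonneg v) as Hv.
  destruct (Hl (eta / (hnorm v + 1))) as [N HN]; [apply Rdiv_lt_0_compat; lra|].
  specialize (HN N (le_n N)). rewrite <- (Hu N), <- hinner_sub_l.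
  eapply Rle_lt_trans; [apply Rabs_hinner_le|]. rewrite hnorm_sub_sym.
  apply (Rle_lt_trans _ (eta / (hnorm v + 1) * hnorm v)); [apply Rmult_le_compat_r; lra|].
  apply (Rmult_lt_reg_r (hnorm v + 1)); [lra|].
  field_simplify; lra.
Qed.

Lemma nearest_of_orthogonal (C : X -> Prop) (x p : X) :
  C p -> (forall z, C z -> hinner (hsub x p) (hsub p z) = 0) -> is_proj C x p.
Proof.
  intros Hp Horth. split; [assumption|]. intros z Hz.
  apply hnorm_le_of_hnorm2_le.
  replace (hsub x z) with (hadd (hsub x p) (hsub p z)) by (apply hvec_ext; intro; hinner_expand; ring).
  rewrite hnorm2_add, (Horth z Hz). pose proof (hnorm2_nonneg (hsub p z)). lra.
Qed.

End Convergence.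

Section Windows.
Context {I : Type}.

Definition fam_remove (J : I -> bool) (j : I) : I -> bool :=
  fun k => if excluded_middle_informative (k = j) then false else J k.

Lemma fam_remove_true J j k : fam_remove J j k = true <-> J k = true /\ k <> j.
Proof. unfold fam_remove. destruct excluded_middle_informative; intuition congruence. Qed.

Lemma filter_length_le (f g : I -> bool) (l : list I) :
  (forall k, f k = true -> g k = true) -> (length (filter f l) <= length (filter g l))%nat.
Proof.
  intro H. induction l as [|a l IH]; simpl; [lia|].
  destruct (f a) eqn:Ef; [rewrite (H a Ef); simpl; lia|].
  destruct (g a); simpl; lia.
Qed.

Lemma filter_length_lt (f g : I -> bool) (l : list I) j :
  (forall k, f k = true -> g k = true) -> In j l -> g j = true -> f j = false ->
  (length (filter f l) < length (filter g l))%nat.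
Proof.
  intros H Hj Hg Hf. induction l as [|a l IH]; [destruct Hj|].
  simpl. destruct Hj as [<-|Hj].
  - rewrite Hf, Hg. simpl. pose proof (filter_length_le f g l H). lia.
  - specialize (IH Hj). destruct (f a) eqn:Ef; [rewrite (H a Ef); simpl; lia|].
    destruct (g a); simpl; lia.
Qed.

Lemma fam_remove_length_lt (J : I -> bool) (l : list I) j :
  In j l -> J j = true -> (length (filter (fam_remove J j) l) < length (filter J l))%nat.
Proof.
  intros Hj HJj. apply filter_length_lt with j; auto.
  - intros k Hk. apply fam_remove_true in Hk. tauto.
  - destruct (fam_remove J j j) eqn:E; [|reflexivity].
    apply fam_remove_true in E. tauto.
Qed.

Variable r : nat -> I.

Definition stays_in (J : I -> bool) (a b : nat) : Prop :=
  forall n, (a <= n < b)%nat -> J (r n) = true.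

Definition covers (J : I -> bool) (a b : nat) : Prop :=
  forall i, J i = true -> exists n, (a <= n < b)%nat /\ r n = i.

Lemma covers_last_new (J : I -> bool) a b :
  (exists i, J i = true) -> stays_in J a b -> covers J a b ->
  exists c, (a <= c < b)%nat /\
    stays_in (fam_remove J (r c)) a c /\ covers (fam_remove J (r c)) a c.
Proof.
  intros [i0 Hi0] Hstay Hcov.
  destruct (Wf_nat.dec_inh_nat_subset_has_unique_least_element (covers J a)
    (fun k => classic _) (ex_intro _ b Hcov)) as [c' [[Hc' Hmin] _]].
  assert (Hc'b : (c' <= b)%nat) by (apply Hmin, Hcov).
  destruct (Hc' i0 Hi0) as [n0 [Hn0 _]].
  destruct c' as [|c]; [lia|].
  exists c. split; [lia|]. split.
  - intros n Hn. apply fam_remove_true. split; [apply Hstay; lia|].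
    intro Hrn. enough (S c <= c)%nat by lia. apply Hmin.
    intros i Hi. destruct (Hc' i Hi) as [m [Hm Hrm]].
    destruct (Nat.eq_dec m c) as [->|Hmc]; [exists n; split; [lia|congruence]|].
    exists m. split; [lia|assumption].
  - intros i Hi. apply fam_remove_true in Hi. destruct Hi as [Hi Hic].
    destruct (Hc' i Hi) as [m [Hm Hrm]]. exists m. split; [|assumption].
    destruct (Nat.eq_dec m c); [subst; contradiction|lia].
Qed.

Lemma random_map_covers : random_map r -> forall (l : list I) N,
  exists b, (N <= b)%nat /\ forall i, In i l -> exists n, (N <= n < b)%nat /\ r n = i.
Proof.
  intros Hr l N. induction l as [|a l IH].
  - exists N. split; [lia|]. intros i [].
  - destruct IH as [b [Hb Hl]]. destruct (Hr a N) as [n [Hn Ha]].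
    exists (Nat.max b (S n)). split; [lia|]. intros i [<-|Hi].
    + exists n. split; [lia|assumption].
    + destruct (Hl i Hi) as [m [Hm Hmi]]. exists m. split; [lia|assumption].
Qed.

End Windows.

Section MaxDist.
Context {X : RHilbert} {I : Type}.
Variables (enum : list I) (C : I -> X -> Prop) (J : I -> bool).

Lemma max_dist_nonneg y : 0 <= max_dist enum C J y.
Proof.
  unfold max_dist. induction (filter J enum); simpl; [lra|].
  eapply Rle_trans; [eassumption|apply Rmax_r].
Qed.

Lemma max_dist_lt y d :
  0 < d -> (forall i, J i = true -> dist (C i) y < d) -> max_dist enum C J y < d.
Proof.
  intros Hd H. unfold max_dist. induction enum as [|a l IH]; simpl; [assumption|].
  destruct (J a) eqn:E; simpl; [apply Rmax_lub_lt|]; auto.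
Qed.

End MaxDist.

Section RandomIteration.
Variables (X : RHilbert) (I : Type) (enum : list I) (T : I -> X -> X) (r : nat -> I) (x0 z0 : X).
Hypothesis Henum : forall i, In i enum.
Hypothesis HTavg : forall i, averaged_nonexpansive (T i).

Local Notation FixJ J := (inter_fam (fun i => Fix (T i)) J).
Local Notation Z := (FixJ (fun _ => true)).
Local Notation u := (iterates T r x0).
Local Notation in_ball y := (hnorm (hsub y z0) <= hnorm (hsub x0 z0)).

Hypothesis Hz0 : Z z0.

Lemma T_nonexpansive i : nonexpansive (T i).
Proof. apply averaged_nonexpansive_is_nonexpansive, HTavg. Qed.

Lemma FixJ_z0 J : FixJ J z0.
Proof. intros i _. apply Hz0. reflexivity. Qed.

Lemma iterates_fejer z : Z z -> forall n m, (n <= m)%nat ->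
  hnorm (hsub (u m) z) <= hnorm (hsub (u n) z).
Proof.
  intros Hz n m Hnm. induction Hnm as [|m Hnm IH]; [lra|].
  eapply Rle_trans; [|exact IH]. simpl. rewrite <- (Hz (r m) eq_refl) at 1.
  apply T_nonexpansive.
Qed.

Lemma iterates_in_ball n : in_ball (u n).
Proof. apply (iterates_fejer z0 Hz0 0 n). lia. Qed.

Lemma dist_iterates_nonincreasing J a b : stays_in r J a b -> (a <= b)%nat ->
  dist (FixJ J) (u b) <= dist (FixJ J) (u a).
Proof.
  intros Hstay Hab. induction Hab as [|b Hab IH]; [lra|].
  eapply Rle_trans; [|apply IH; intros n Hn; apply Hstay; lia].
  apply (dist_fixing_nonexpansive _ (ex_intro _ z0 (FixJ_z0 J)) (T (r b)) (u b) (T_nonexpansive _)).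
  intros c Hc. apply Hc, Hstay. lia.
Qed.

Lemma steps_vanish : vanishes (fun n => hnorm (hsub (u n) (u (S n)))).
Proof.
  destruct (uniform_pos_min (fun i c => forall y z, Fix (T i) z ->
      c * hnorm2 (hsub y (T i y)) <= hnorm2 (hsub y z) - hnorm2 (hsub (T i y) z)) enum)
    as [c [Hc Hsqne]].
  { intros i c c' Hc' H y z Hz. specialize (H y z Hz).
    pose proof (hnorm2_nonneg (hsub y (T i y))). nra. }
  { intros i _. apply averaged_strongly_quasinonexpansive, HTavg. }
  assert (Hgap : vanishes (fun n => c * hnorm2 (hsub (u n) (u (S n))))).
  { apply (decrements_vanish (fun n => hnorm2 (hsub (u n) z0))); [intro; apply hnorm2_nonneg|].
    intro n. split; [pose proof (hnorm2_nonneg (hsub (u n) (u (S n)))); nra|].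
    exact (Hsqne (r n) (Henum _) (u n) z0 (Hz0 (r n) eq_refl)). }
  intros eps Heps. destruct (Hgap (c * (eps * eps))) as [N HN]; [apply Rmult_lt_0_compat; nra|].
  exists N. intros n Hn. specialize (HN n Hn).
  apply Rmult_lt_reg_l in HN; [|assumption]. rewrite <- hnorm_sqr in HN.
  pose proof (hnorm_nonneg (hsub (u n) (u (S n)))). nra.
Qed.

Lemma iterates_inner_invariant : affine_subspace Z ->
  forall z w, Z z -> Z w -> forall n, hinner (u n) (hsub w z) = hinner x0 (hsub w z).
Proof.
  intros [_ Haff] z w Hz Hw n. induction n as [|n IH]; [reflexivity|].
  simpl. rewrite <- IH. apply averaged_preserves_inner_along_fix_line; [apply HTavg|].
  intro t. exact (Haff z w t Hz Hw (r n) eq_refl).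
Qed.

Lemma limit_is_projection l : affine_subspace Z -> Z l -> converges_to u l -> is_proj Z x0 l.
Proof.
  intros Haff Hl Hconv. apply nearest_of_orthogonal; [exact Hl|]. intros z Hz.
  pose proof (converges_inner u l _ _ Hconv (iterates_inner_invariant Haff z l Hz Hl)).
  rewrite hinner_sub_l. lra.
Qed.

Hypothesis HTreg : forall i, boundedly_regular_op (T i).
Hypothesis HZreg : innately_boundedly_regular enum (fun i => Fix (T i)).

Lemma fix_dist_uniform eps : 0 < eps -> exists d, 0 < d /\
  forall i y, in_ball y -> hnorm (hsub y (T i y)) < d -> dist (Fix (T i)) y < eps.
Proof.
  intro Heps.
  destruct (uniform_pos_min (fun i d => forall y, in_ball y ->
      hnorm (hsub y (T i y)) < d -> dist (Fix (T i)) y < eps) enum) as [d [Hd H]].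
  { intros i d d' Hd' Hi y Hy Hs. apply Hi; [assumption|lra]. }
  { intros i _. apply regularity_uniform_on_ball; [intro; apply hnorm_nonneg | apply HTreg | exact Heps]. }
  exists d. split; [assumption|]. intro i. apply H, Henum.
Qed.

Definition window_controls (J : I -> bool) (eps d : R) : Prop :=
  forall a b, (forall n, (a <= n < b)%nat -> hnorm (hsub (u n) (u (S n))) < d) ->
    stays_in r J a b -> covers r J a b -> dist (FixJ J) (u b) < eps.

Lemma window_controls_empty_fam J eps d :
  (forall i, J i = false) -> 0 < eps -> window_controls J eps d.
Proof.
  intros HJ Heps a b _ _ _. rewrite (dist_mem _ (ex_intro _ z0 (FixJ_z0 J))); [assumption|].
  intros i Hi. rewrite HJ in Hi. discriminate.
Qed.

Lemma window_controls_step J eps d1 d :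
  (exists i, J i = true) -> 0 < d1 -> d <= d1 / 2 ->
  (forall y, in_ball y -> max_dist enum (fun i => Fix (T i)) J y < d1 -> dist (FixJ J) y < eps) ->
  (forall i y, in_ball y -> hnorm (hsub y (T i y)) < d -> dist (Fix (T i)) y < d1 / 2) ->
  (forall j, J j = true -> window_controls (fam_remove J j) (d1 / 2) d) ->
  window_controls J eps d.
Proof.
  intros HJ Hd1 Hd Hfam Hop Hrem a b Hsteps Hstay Hcov.
  destruct (covers_last_new r J a b HJ Hstay Hcov) as [c [Hc [Hstay' Hcov']]].
  assert (Hnear : forall i, J i = true -> dist (Fix (T i)) (u c) < d1 / 2).
  { intros i Hi. destruct (classic (i = r c)) as [->|Hic].
    - apply Hop; [apply iterates_in_ball|]. exact (Hsteps c ltac:(lia)).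
    - eapply Rle_lt_trans.
      + apply (dist_antimono (FixJ (fam_remove J (r c)))); [exists z0; apply FixJ_z0|].
        intros y Hy. apply Hy, fam_remove_true. auto.
      + apply (Hrem (r c) (Hstay c ltac:(lia)) a c); [|assumption|assumption].
        intros n Hn. apply Hsteps. lia. }
  eapply Rle_lt_trans.
  { apply (dist_iterates_nonincreasing J (S c) b); [intros n Hn; apply Hstay|]; lia. }
  apply Hfam; [apply iterates_in_ball|]. apply max_dist_lt; [assumption|].
  intros i Hi. eapply Rle_lt_trans; [apply (dist_lipschitz (Fix (T i)) (ex_intro _ z0 (Hz0 i eq_refl)) (u c))|].
  pose proof (Hnear i Hi). pose proof (Hsteps c ltac:(lia)). lra.
Qed.

Lemma window_controls_exists J eps : 0 < eps -> exists d, 0 < d /\ window_controls J eps d.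
Proof.
  revert eps.
  induction J as [J IH] using (well_founded_induction
    (Wf_nat.well_founded_ltof _ (fun J => length (filter J enum)))).
  intros eps Heps.
  destruct (classic (exists i, J i = true)) as [HJ|HJ].
  2:{ exists 1. split; [lra|]. apply window_controls_empty_fam; [|assumption].
      intro i. destruct (J i) eqn:E; [exfalso; eauto|reflexivity]. }
  destruct (regularity_uniform_on_ball _ _ z0 (hnorm (hsub x0 z0))
    (max_dist_nonneg enum (fun i => Fix (T i)) J) (HZreg J HJ) eps Heps) as [d1 [Hd1 Hfam]].
  destruct (fix_dist_uniform (d1 / 2)) as [dop [Hdop Hop]]; [lra|].
  destruct (uniform_pos_min (fun j d => J j = true -> window_controls (fam_remove J j) (d1 / 2) d) enum)
    as [dw [Hdw Hw]].
  { intros j d d' Hd' H Hj a b Hs. apply H; [assumption|]. intros n Hn. specialize (Hs n Hn). lra. }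
  { intros j _. destruct (J j) eqn:Hj; [|exists 1; split; [lra|discriminate]].
    destruct (IH (fam_remove J j) (fam_remove_length_lt J enum j (Henum j) Hj) (d1 / 2))
      as [d [Hd Hwin]]; [lra|].
    exists d. auto. }
  set (d := Rmin (d1 / 2) (Rmin dop dw)).
  assert (Hd_le : d <= d1 / 2 /\ d <= dop /\ d <= dw).
  { unfold d. pose proof (Rmin_l (d1 / 2) (Rmin dop dw)). pose proof (Rmin_r (d1 / 2) (Rmin dop dw)).
    pose proof (Rmin_l dop dw). pose proof (Rmin_r dop dw). lra. }
  exists d. split; [unfold d; repeat apply Rmin_glb_lt; lra|].
  apply (window_controls_step J eps d1 d HJ Hd1); try tauto.
  - intros i y Hy Hs. apply Hop; [assumption|lra].
  - intros j Hj a b Hs. apply (Hw j (Henum j) Hj). intros n Hn. specialize (Hs n Hn). lra.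
Qed.

Hypothesis Hr : random_map r.

Lemma dist_fix_vanishes : vanishes (fun n => dist Z (u n)).
Proof.
  intros eps Heps.
  destruct (window_controls_exists (fun _ => true) eps Heps) as [d [Hd Hwin]].
  destruct (steps_vanish d Hd) as [N HN].
  destruct (random_map_covers r Hr enum N) as [b [Hb Hcov]].
  exists b. intros n Hn.
  eapply Rle_lt_trans; [apply (dist_iterates_nonincreasing _ b n); [intros ? ?; reflexivity | assumption]|].
  apply (Hwin N b).
  - intros m Hm. apply HN. lia.
  - intros ? ?. reflexivity.
  - intros i _. apply Hcov, Henum.
Qed.

Lemma iterates_converge : exists l, Z l /\ converges_to u l.
Proof.
  assert (HZ : exists z, Z z) by (exists z0; exact Hz0).
  destruct (hcomplete X u (fejer_cauchy u Z HZ iterates_fejer dist_fix_vanishes)) as [l Hl].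
  exists l. split; [|exact Hl].
  intros i _. apply (limit_fixed (T i) Z u l (T_nonexpansive i)); [|exact HZ|exact Hl|exact dist_fix_vanishes].
  intros c Hc. apply Hc. reflexivity.
Qed.

End RandomIteration.

Theorem theorem7p2 (X : RHilbert) (I : Type) (enum : list I)
  (Henum : forall i : I, In i enum)
  (T : I -> X -> X)
  (HTavg : forall i, averaged_nonexpansive (T i))
  (HTreg : forall i, boundedly_regular_op (T i))
  (HZne : exists z, inter_fam (fun i => Fix (T i)) (fun _ => true) z)
  (HZreg : innately_boundedly_regular enum (fun i => Fix (T i)))
  (x0 : X) (r : nat -> I) (Hr : random_map r) :
  exists zbar : X,
    inter_fam (fun i => Fix (T i)) (fun _ => true) zbar /\
    converges_to (iterates T r x0) zbar /\
    (affine_subspace (inter_fam (fun i => Fix (T i)) (fun _ => true)) ->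
       is_proj (inter_fam (fun i => Fix (T i)) (fun _ => true)) x0 zbar).
Proof.
  destruct HZne as [z0 Hz0].
  destruct (iterates_converge X I enum T r x0 z0 Henum HTavg Hz0 HTreg HZreg Hr) as [l [Hl Hconv]].
  exists l. split; [exact Hl|]. split; [exact Hconv|].
  intro Haff. exact (limit_is_projection X I T r x0 HTavg l Haff Hl Hconv).
Qed.
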